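(* Let $\mathcal{X}\subseteq\mathbb{R}^N$ and let $K_k(\mathbf{x},\mathbf{y})=(\mathbf{x}^\top\mathbf{y}+1)^k$ be the polynomial kernel of degree $k$ on $\mathcal{X}$. Let $\kappa_k=\sup_{x\in\mathcal{X}}\sqrt{K_k(x,x)}$, let $H_k=\{x\mapsto \pm K_k(x,x') : x'\in\mathcal{X}\}$, and let $d_k=\binom{N+k}{k}$ be the dimension of the feature space of $K_k$. Then for any sample $S=(x_1,\dots,x_m)$ of points of $\mathcal{X}$, \[ \widehat{\mathfrak{R}}_S(H_k)\le 12\,\kappa_k^2\sqrt{\frac{\pi d_k}{m}}. \]
   Context: For a set $H$ of real-valued functions on $\mathcal{X}$, the empirical Rademacher complexity on $S$ is $\widehat{\mathfrak{R}}_S(H)=\frac1m\mathbb{E}_\sigma\big[\sup_{h\in H}\sum_{i=1}^m\sigma_ih(x_i)\big]$, where $\sigma_1,\dots,\sigma_m$ are independent random variables uniformly distributed on $\{-1,+1\}$. *)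

From HB Require Import structures.
From mathcomp Require Import all_boot all_order all_algebra.
From mathcomp Require Import all_classical all_reals.
From mathcomp Require Import ereal trigo.
Set Implicit Arguments. Unset Strict Implicit. Unset Printing Implicit Defensive.
Import Order.TTheory GRing.Theory Num.Theory.
Local Open Scope ring_scope.
Local Open Scope classical_set_scope.

Definition poly_kernel (R : realType) (N k : nat) (x y : 'rV[R]_N) : R :=
  ((\sum_(j < N) x ord0 j * y ord0 j) + 1) ^+ k.

(* kappa_k = sup_{x in X} sqrt(K_k(x,x)), in the extended reals
   (it is +oo when X is unbounded, -oo when X is empty). *)
Definition kappa (R : realType) (N k : nat) (X : set 'rV[R]_N) : \bar R :=
  ereal_sup [set (Num.sqrt (poly_kernel k x x))%:E | x in X].

Definition Hk (R : realType) (N k : nat) (X : set 'rV[R]_N) : set ('rV[R]_N -> R) :=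
  [set h | exists s : R, exists2 x', (s = 1 \/ s = -1) /\ X x' &
                                    h = fun x => s * poly_kernel k x x'].

(* Rademacher sign: sigma_i = (-1)^(b_i), with b uniform on {0,1}^m. *)
Definition rsign (R : realType) (b : bool) : R := (-1) ^+ b.

(* Empirical Rademacher complexity of H on the sample S = (x_1,...,x_m):
   (1/m) E_sigma [ sup_{h in H} sum_i sigma_i h(x_i) ], where sigma is uniform
   on {-1,+1}^m, i.e. the expectation is the average over all 2^m sign vectors. *)
Definition emp_rademacher (R : realType) (T : Type) (m : nat)
    (H : set (T -> R)) (S : 'I_m -> T) : \bar R :=
  ((m%:R)^-1 * (2 ^+ m)^-1)%:E *
  (\sum_(b : {ffun 'I_m -> bool})
     ereal_sup [set (\sum_(i < m) rsign R (b i) * h (S i))%:E | h in H])%E.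

From HB Require Import structures.
From mathcomp Require Import all_boot all_order all_algebra.
From mathcomp Require Import all_classical all_reals.
From mathcomp Require Import ereal trigo.
From mathcomp Require Import ring lra.
Set Implicit Arguments. Unset Strict Implicit. Unset Printing Implicit Defensive.
Import Order.TTheory GRing.Theory Num.Theory.
Local Open Scope ring_scope.
Local Open Scope classical_set_scope.

(* With a feature map phi such that K x y = <phi x, phi y>, Cauchy-Schwarz
   bounds the correlation of a signed section s K(., x') with a sign vector
   sigma by |sum_i sigma_i phi(x_i)| |phi x'|.  Averaging over sigma,
   Cauchy-Schwarz again and the orthogonality E[sigma_i sigma_j] = [i = j]
   give E |sum_i sigma_i phi(x_i)| <= sqrt (sum_i K(x_i, x_i)) <= sqrt m kappa,
   hence a Rademacher complexity at most kappa^2 / sqrt m, whatever the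
   dimension of the feature space.  The stated bound is weaker, since
   144 pi d_k >= 1. *)

Section CauchySchwarz.
Variables (R : rcfType) (I : finType).

Lemma sqr_sum (F : I -> R) : (\sum_i F i) ^+ 2 = \sum_i \sum_j F i * F j.
Proof. by rewrite expr2 mulr_suml; apply: eq_bigr => i _; rewrite mulr_sumr. Qed.

Lemma sqr_sum_mul_le (v w : I -> R) :
  (\sum_i v i * w i) ^+ 2 <= (\sum_i v i ^+ 2) * (\sum_i w i ^+ 2).
Proof.
have : 0 <= \sum_a \sum_b (v a * w b - v b * w a) ^+ 2.
  by apply: sumr_ge0 => a _; apply: sumr_ge0 => b _; exact: sqr_ge0.
have -> : \sum_a \sum_b (v a * w b - v b * w a) ^+ 2 =
    \sum_a \sum_b v a ^+ 2 * w b ^+ 2 + \sum_a \sum_b v b ^+ 2 * w a ^+ 2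
    - 2 * \sum_a \sum_b v a * w a * (v b * w b).
  rewrite mulr_sumr -!big_split -sumrN -big_split; apply: eq_bigr => a _ /=.
  rewrite mulr_sumr -!big_split -sumrN -big_split; apply: eq_bigr => b _ /=.
  by ring.
have -> : \sum_a \sum_b v b ^+ 2 * w a ^+ 2 = \sum_a \sum_b v a ^+ 2 * w b ^+ 2.
  exact: exchange_big.
have -> : \sum_a \sum_b v a ^+ 2 * w b ^+ 2 = (\sum_i v i ^+ 2) * (\sum_i w i ^+ 2).
  by rewrite mulr_suml; apply: eq_bigr => a _; rewrite mulr_sumr.
rewrite -sqr_sum; lra.
Qed.

Lemma sum_mul_le_sqrt (v w : I -> R) :
  \sum_i v i * w i <= Num.sqrt (\sum_i v i ^+ 2) * Num.sqrt (\sum_i w i ^+ 2).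
Proof.
rewrite -sqrtrM; last by apply: sumr_ge0 => i _; exact: sqr_ge0.
apply: le_trans (ler_norm _) _; rewrite -sqrtr_sqr ler_sqrt ?sqr_sum_mul_le //.
by apply: mulr_ge0; apply: sumr_ge0 => i _; exact: sqr_ge0.
Qed.

End CauchySchwarz.

Section RademacherSigns.
Variables (R : realType) (m : nat).
Local Notation signs := {ffun 'I_m -> bool}.

Lemma rsign_mul_self (b : bool) : rsign R b * rsign R b = 1.
Proof. by case: b; rewrite /rsign /= ?mulrNN mulr1. Qed.

Definition flip_sign (i : 'I_m) (b : signs) : signs :=
  [ffun t => if t == i then ~~ b t else b t].

Lemma flip_signK i : involutive (flip_sign i).
Proof. by move=> b; apply/ffunP => t; rewrite !ffunE; case: eqP; rewrite ?negbK. Qed.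

Lemma sum_rsign_mul (i j : 'I_m) :
  \sum_(b : signs) rsign R (b i) * rsign R (b j) =
  if i == j then (2 ^ m)%:R else 0.
Proof.
case: eqVneq => [<-|neq_ij].
  under eq_bigr do rewrite rsign_mul_self.
  by rewrite sumr_const card_ffun card_bool card_ord.
set s := (X in X = _).
(* Reindexing by the involution that flips the i-th sign negates every term. *)
suff : s = - s by lra.
rewrite /s {1}(reindex_inj (can_inj (flip_signK i))) -sumrN.
apply: eq_bigr => b _; rewrite !ffunE eqxx eq_sym (negbTE neq_ij).
by case: (b i); rewrite /rsign /= ?mulr1 ?mulN1r ?mul1r ?opprK.
Qed.

Lemma sum_sqr_rademacher (F : finType) (u : 'I_m -> F -> R) :
  \sum_(b : signs) \sum_f (\sum_i rsign R (b i) * u i f) ^+ 2 =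
  (2 ^ m)%:R * \sum_i \sum_f u i f ^+ 2.
Proof.
transitivity (\sum_i \sum_f \sum_j
    u i f * u j f * \sum_(b : signs) rsign R (b i) * rsign R (b j)).
  rewrite exchange_big [RHS]exchange_big; apply: eq_bigr => f _.
  under eq_bigr do rewrite sqr_sum.
  rewrite exchange_big; apply: eq_bigr => i _.
  rewrite exchange_big; apply: eq_bigr => j _.
  by rewrite mulr_sumr; apply: eq_bigr => b _; ring.
rewrite mulr_sumr; apply: eq_bigr => i _; rewrite mulr_sumr.
apply: eq_bigr => f _; under eq_bigr do rewrite sum_rsign_mul.
rewrite (bigD1 i) //= eqxx big1 ?addr0; first by rewrite mulrC expr2.
by move=> j; rewrite eq_sym => /negbTE ->; rewrite mulr0.
Qed.

End RademacherSigns.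

Section FeatureKernel.
Variables (R : realType) (T : Type) (F : finType).
Variables (phi : T -> F -> R) (K : T -> T -> R).
Hypothesis K_feature : forall x y, K x y = \sum_f phi x f * phi y f.
Local Notation signs m := {ffun 'I_m -> bool}.

Definition signed_sections (X : set T) : set (T -> R) :=
  [set h | exists s : R, exists2 x', (s = 1 \/ s = -1) /\ X x' &
                                     h = fun x => s * K x x'].

Lemma kernel_diag x : K x x = \sum_f phi x f ^+ 2.
Proof. by rewrite K_feature; apply: eq_bigr => f _; rewrite expr2. Qed.

Lemma kernel_diag_ge0 x : 0 <= K x x.
Proof. by rewrite kernel_diag; apply: sumr_ge0 => f _; exact: sqr_ge0. Qed.

Variables (m : nat) (S : 'I_m -> T).

Definition signed_feature_norm (b : signs m) : R :=
  Num.sqrt (\sum_f (\sum_i rsign R (b i) * phi (S i) f) ^+ 2).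

Lemma signed_sections_correlation_le (X : set T) (r : R) (b : signs m) :
  (forall x, X x -> Num.sqrt (K x x) <= r) ->
  (ereal_sup [set (\sum_(i < m) rsign R (b i) * h (S i))%:E
             | h in signed_sections X] <= (signed_feature_norm b * r)%:E)%E.
Proof.
move=> K_le; apply: ge_ereal_sup => _ [_ [s [x' [s_sign Xx'] ->]] <-].
rewrite lee_fin /signed_feature_norm.
have s_sqr : s ^+ 2 = 1 by case: s_sign => ->; rewrite ?sqrrN expr1n.
have -> : \sum_i rsign R (b i) * (s * K (S i) x') =
    \sum_f (s * \sum_i rsign R (b i) * phi (S i) f) * phi x' f.
  under eq_bigr do rewrite K_feature mulr_sumr mulr_sumr.
  rewrite exchange_big; apply: eq_bigr => f _.
  by rewrite mulr_sumr mulr_suml; apply: eq_bigr => i _; ring.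
apply: le_trans (sum_mul_le_sqrt _ _) _.
under eq_bigr do rewrite exprMn s_sqr mul1r.
by rewrite -kernel_diag ler_wpM2l ?sqrtr_ge0 ?K_le.
Qed.

Lemma sum_signed_feature_norm_le (r : R) :
  0 <= r -> (forall i, Num.sqrt (K (S i) (S i)) <= r) ->
  \sum_(b : signs m) signed_feature_norm b <= 2 ^+ m * (Num.sqrt m%:R * r).
Proof.
move=> r_ge0 K_le.
have norm_sqr b : signed_feature_norm b ^+ 2 =
    \sum_f (\sum_i rsign R (b i) * phi (S i) f) ^+ 2.
  by rewrite sqr_sqrtr //; apply: sumr_ge0 => f _; exact: sqr_ge0.
have sum_K_le : \sum_i K (S i) (S i) <= m%:R * r ^+ 2.
  rewrite -[m in X in _ <= X]card_ord mulr_natl -sumr_const.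
  apply: ler_sum => i _; rewrite -(sqr_sqrtr (kernel_diag_ge0 (S i))).
  by rewrite ler_sqr ?nnegrE ?sqrtr_ge0.
rewrite -ler_sqr ?nnegrE ?sumr_ge0 ?mulr_ge0 ?sqrtr_ge0 ?exprn_ge0 //;
  last by move=> b _; exact: sqrtr_ge0.
rewrite -(eq_bigr _ (fun b _ => mulr1 (signed_feature_norm b))).
apply: le_trans (sqr_sum_mul_le _ _) _.
under eq_bigr do rewrite norm_sqr.
rewrite sum_sqr_rademacher -(eq_bigr _ (fun f _ => kernel_diag _)).
under [X in _ * X]eq_bigr do rewrite expr1n.
rewrite sumr_const card_ffun card_bool card_ord natrX !exprMn sqr_sqrtr //.
by rewrite mulrAC -expr2 ler_wpM2l ?sqr_ge0.
Qed.

Lemma emp_rademacher_signed_sections_le (X : set T) (r : R) :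
  0 <= r -> (forall i, X (S i)) -> (forall x, X x -> Num.sqrt (K x x) <= r) ->
  (emp_rademacher (signed_sections X) S <=
   (Num.sqrt m%:R / m%:R * r ^+ 2)%:E)%E.
Proof.
move=> r_ge0 XS K_le; rewrite /emp_rademacher.
have pow2_gt0 : 0 < 2 ^+ m :> R by rewrite exprn_gt0.
apply: (@le_trans _ _ ((m%:R^-1 * (2 ^+ m)^-1)%:E *
    \sum_(b : signs m) (signed_feature_norm b * r)%:E)%E).
  apply: lee_wpmul2l; first by rewrite lee_fin mulr_ge0 ?invr_ge0 ?ler0n ?ltW.
  by apply: lee_sum => b _; exact: signed_sections_correlation_le.
rewrite sumEFin -EFinM lee_fin -mulr_suml mulrA.
have norm_le := sum_signed_feature_norm_le r_ge0 (fun i => K_le _ (XS i)).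
apply: le_trans (ler_wpM2r r_ge0 (ler_wpM2l _ norm_le)) _.
  by rewrite mulr_ge0 ?invr_ge0 ?ler0n ?ltW.
(* m may be 0, so [field] must treat m%:R^-1 as an opaque factor. *)
set u := m%:R^-1; rewrite le_eqVlt; apply/orP; left; apply/eqP.
by field; rewrite gt_eqF.
Qed.

End FeatureKernel.

Section PolynomialKernel.
Variables (R : realType) (N k : nat).

(* The monomial features of degree k of the point (x, 1) of R^(N+1),
   indexed by all words of length k over its coordinates. *)
Definition poly_feature (x : 'rV[R]_N) (f : {ffun 'I_k -> 'I_(N + 1)}) : R :=
  \prod_(t < k) row_mx x (1 : 'rV_1) ord0 (f t).

Lemma poly_kernel_feature x y :
  poly_kernel k x y = \sum_f poly_feature x f * poly_feature y f.
Proof.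
rewrite /poly_kernel.
have -> : \sum_(j < N) x ord0 j * y ord0 j + 1 =
    \sum_(j < N + 1) row_mx x (1 : 'rV_1) ord0 j * row_mx y (1 : 'rV_1) ord0 j.
  rewrite big_split_ord big_ord1 /= !row_mxEr !mxE mulr1; congr (_ + _).
  by apply: eq_bigr => j _; rewrite !row_mxEl.
rewrite -[in X in _ ^+ X](card_ord k) -prodr_const bigA_distr_bigA /=.
by apply: eq_bigr => f _; rewrite -big_split.
Qed.

End PolynomialKernel.

Lemma inv_sqrt_le_const_sqrt (R : realType) (m : nat) (d : R) :
  (0 < m)%N -> 1 <= d ->
  Num.sqrt m%:R / m%:R <= 12 * Num.sqrt (pi * d / m%:R).
Proof.
move=> m_gt0 d_ge1; have M_gt0 : 0 < m%:R :> R by rewrite ltr0n.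
have pid_ge0 : 0 <= pi * d / m%:R.
  by rewrite divr_ge0 ?ler0n ?mulr_ge0 ?(ltW (pi_gt0 R)) // (le_trans ler01).
rewrite -ler_sqr ?nnegrE ?mulr_ge0 ?divr_ge0 ?sqrtr_ge0 ?ler0n //.
rewrite !exprMn !sqr_sqrtr ?ler0n // expr2 mulrA mulfV ?gt_eqF // mul1r.
rewrite !mulrA -[X in X <= _]mul1r ler_wpM2r ?invr_ge0 ?ler0n //.
have := pi_ge2 R; nra.
Qed.

Theorem lemma2 (R : realType) (N k : nat) (X : set 'rV[R]_N)
    (m : nat) (hm : (0 < m)%N) (S : 'I_m -> 'rV[R]_N)
    (hS : forall i, X (S i)) :
  (emp_rademacher (Hk k X) S <=
   (12 * Num.sqrt (pi * ('C(N + k, k))%:R / m%:R))%:E *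
   (kappa k X * kappa k X))%E.
Proof.
set c := 12 * _.
have d_ge1 : 1 <= ('C(N + k, k))%:R :> R by rewrite ler1n bin_gt0 leq_addl.
have c_gt0 : 0 < c.
  apply: lt_le_trans (inv_sqrt_le_const_sqrt hm d_ge1).
  by rewrite divr_gt0 ?sqrtr_gt0 ?ltr0n.
have XS0 : X (S (Ordinal hm)) by [].
have kappa_ub x : X x -> ((Num.sqrt (poly_kernel k x x))%:E <= kappa k X)%E.
  by move=> Xx; apply: ereal_sup_ubound; exists x.
case: (kappa k X) kappa_ub => [r||] kappa_ub.
- have r_ub x : X x -> Num.sqrt (poly_kernel k x x) <= r.
    by move/kappa_ub; rewrite lee_fin.
  have r_ge0 : 0 <= r := le_trans (sqrtr_ge0 _) (r_ub _ XS0).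
  apply: le_trans (emp_rademacher_signed_sections_le
    (@poly_kernel_feature R N k) r_ge0 hS r_ub) _.
  by rewrite -!EFinM lee_fin -expr2 ler_wpM2r ?sqr_ge0 ?inv_sqrt_le_const_sqrt.
- by rewrite mulyy mulry gtr0_sg // mul1e leey.
- by have := kappa_ub _ XS0; rewrite leeNy_eq.
Qed.
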